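(* Consider the full-duplex (FD) two-stage relay selection (TRS) scheme described in the context, with $\varpi=1$, thresholds $\gamma_{th_j}=2^{R_{D_j}}-1$ for $j=1,2$, and power coefficients satisfying $0<a_1<a_2$, $a_1+a_2=1$, $a_2>a_1\gamma_{th_2}$. Then its diversity order is zero: $$-\lim_{\rho\to\infty}\frac{\log P_{TRS}^{FD}(\rho)}{\log\rho}=0 .$$
   Context: Network model. A base station (BS) is at the origin of the plane. There are $K\ge 1$ relays $R_1,\dots,R_K$ whose positions are i.i.d. uniformly distributed in the disc of radius $R_{\mathcal D}>0$ centred at the origin; $d_{SR_i}$ is the distance from the BS to $R_i$. Two users $D_1,D_2$ are at fixed points of the plane at distances $d_1,d_2>0$ from the BS, and $d_{R_iD_j}$ is the Euclidean distance between $R_i$ and $D_j$. Let $\alpha>0$ be the path loss exponent. The random variables $g_{SR_i}$, $g_{R_iD_1}$, $g_{R_iD_2}$ ($i=1,\dots,K$) are exponentially distributed with mean $1$ (squared magnitudes of $\mathcal{CN}(0,1)$ Rayleigh coefficients), $Z_i$ is exponentially distributed with mean $\Omega_{LI}>0$ (loop-interference gain at $R_i$), and all of these are mutually independent and independent of the relay positions. Put $X_i=g_{SR_i}/(1+d_{SR_i}^\alpha)$ and $Y_{ji}=g_{R_iD_j}/(1+d_{R_iD_j}^\alpha)$. Let $\rho>0$ be the transmit SNR, $a_1,a_2$ power allocation coefficients, and $\varpi\in\{0,1\}$ the duplex factor. Define $\gamma_{D_2\to R_i}=\frac{\rho X_i a_2}{\rho X_i a_1+\rho\varpi Z_i+1}$,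 $\gamma_{D_1\to R_i}=\frac{\rho X_i a_1}{\rho\varpi Z_i+1}$, $\gamma^{(i)}_{D_2\to D_1}=\frac{\rho Y_{1i}a_2}{\rho Y_{1i}a_1+1}$, $\gamma^{(i)}_{D_1}=\rho Y_{1i}a_1$, $\gamma^{(i)}_{D_2}=\frac{\rho Y_{2i}a_2}{\rho Y_{2i}a_1+1}$. Target rates $R_{D_1},R_{D_2}>0$ are given; in FD mode $\varpi=1$ and $\gamma_{th_j}=2^{R_{D_j}}-1$. TRS scheme: let $S=\{i: \gamma_{D_2\to R_i}\ge\gamma_{th_2},\ \gamma^{(i)}_{D_2\to D_1}\ge\gamma_{th_2},\ \gamma^{(i)}_{D_2}\ge\gamma_{th_2}\}$. The outage event is that either $S=\emptyset$, or $S\neq\emptyset$ and $\max_{i\in S}\min\{\gamma_{D_1\to R_i},\gamma^{(i)}_{D_1}\}<\gamma_{th_1}$; $P_{TRS}(\rho)$ is its probability, and $P_{TRS}^{FD}$ denotes it in FD mode. *)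

From HB Require Import structures.
From mathcomp Require Import all_boot all_order all_algebra.
From mathcomp Require Import all_classical all_reals all_analysis.
Set Implicit Arguments. Unset Strict Implicit. Unset Printing Implicit Defensive.
Import Order.TTheory GRing.Theory Num.Theory.
Import numFieldNormedType.Exports.
Local Open Scope classical_set_scope.
Local Open Scope ring_scope.

(** Mutual independence of a finite family of classes of events:
    for every choice of one event per class, the probability of the
    intersection is the product of the probabilities (taking [setT]
    in some classes gives the product rule for every subfamily). *)
Definition indep_classes (R : realType) (d : measure_display)
  (T : measurableType d) (P : probability T R) (J : finType)
  (E : J -> set (set T)) : Prop :=
  forall A : J -> set T, (forall j, E j (A j)) ->
    P (\bigcap_(j in [set: J]) A j) = (\prod_(j : J) P (A j))%E.

Definition events_of (R : realType) (d : measure_display) (T : measurableType d)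
  (X : T -> R) : set (set T) :=
  [set X @^-1` B | B in [set B : set R | measurable B]].

Definition events_of2 (R : realType) (d : measure_display) (T : measurableType d)
  (X Y : T -> R) : set (set T) :=
  [set (fun w => (X w, Y w)) @^-1` B | B in [set B : set (R * R) | measurable B]].

Definition exponential_mean (R : realType) (d : measure_display)
  (T : measurableType d) (P : probability T R) (m : R) (X : T -> R) : Prop :=
  forall t : R, P [set w | t < X w] = (if 0 <= t then expR (- t / m) else 1)%:E.

Definition disc (R : realType) (r : R) : set (R * R) :=
  [set p | p.1 ^+ 2 + p.2 ^+ 2 <= r ^+ 2].

Definition uniform_disc (R : realType) (d : measure_display)
  (T : measurableType d) (P : probability T R) (r : R) (X Y : T -> R) : Prop :=
  forall B : set (R * R), measurable B ->
    P ((fun w => (X w, Y w)) @^-1` B) =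
    ((lebesgue_measure \x lebesgue_measure) (B `&` disc r)
       * ((pi * r ^+ 2)^-1)%:E)%E.

Definition dist2 (R : realType) (p q : R * R) : R :=
  Num.sqrt ((p.1 - q.1) ^+ 2 + (p.2 - q.2) ^+ 2).

Definition gain (R : realType) (alpha g dd : R) : R := g / (1 + dd `^ alpha).

(** SINRs of the FD/HD TRS scheme (varpi is the duplex factor) *)
Definition g_D2_R (R : realType) (rho a1 a2 varpi X Z : R) : R :=
  rho * X * a2 / (rho * X * a1 + rho * varpi * Z + 1).
Definition g_D1_R (R : realType) (rho a1 varpi X Z : R) : R :=
  rho * X * a1 / (rho * varpi * Z + 1).
Definition g_D2_D1 (R : realType) (rho a1 a2 Y1 : R) : R :=
  rho * Y1 * a2 / (rho * Y1 * a1 + 1).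
Definition g_D1 (R : realType) (rho a1 Y1 : R) : R := rho * Y1 * a1.
Definition g_D2 (R : realType) (rho a1 a2 Y2 : R) : R :=
  rho * Y2 * a2 / (rho * Y2 * a1 + 1).

Definition TRS_outage (R : realType) (K : nat) (rho a1 a2 varpi th1 th2 : R)
  (X Y1 Y2 Z : 'I_K -> R) : Prop :=
  let S := [set i : 'I_K | [&& th2 <= g_D2_R rho a1 a2 varpi (X i) (Z i),
                              th2 <= g_D2_D1 rho a1 a2 (Y1 i)
                            & th2 <= g_D2 rho a1 a2 (Y2 i)]] in
  S = set0 \/
  (S != set0 /\
   \big[Num.max/0]_(i in S)
      Num.min (g_D1_R rho a1 varpi (X i) (Z i)) (g_D1 rho a1 (Y1 i)) < th1).

From HB Require Import structures.
From mathcomp Require Import all_boot all_order all_algebra.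
From mathcomp Require Import all_classical all_reals all_analysis.
From mathcomp Require Import measurable_realfun lra.
Import Order.TTheory GRing.Theory Num.Theory.
Import numFieldNormedType.Exports.
Local Open Scope classical_set_scope.
Local Open Scope ring_scope.

(* In full-duplex mode the loop interference enters the SINR of D2's message
   at relay i with the same factor rho as the useful signal, so that SINR is at
   most a2 X_i / Z_i whatever the SNR.  On the event that every relay has
   g_{SR_i} in ]0, 1] and Z_i > a2 / gamma_th2, which has positive probability
   by independence, no relay passes the first selection stage and the system is
   in outage.  Hence P_TRS^FD(rho) stays in [r, 1] for a fixed r > 0, its
   logarithm is bounded, and dividing by ln rho gives 0 in the limit. *)

Section TRS_outage_event.
Variables (R : realType) (rho a1 a2 varpi th1 th2 : R).

Definition TRS_relay_outage (x y1 y2 z : R) : bool :=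
  ~~ [&& th2 <= g_D2_R rho a1 a2 varpi x z, th2 <= g_D2_D1 rho a1 a2 y1
       & th2 <= g_D2 rho a1 a2 y2]
  || (Num.min (g_D1_R rho a1 varpi x z) (g_D1 rho a1 y1) < th1).

(* [0 < th1] is needed because the maximum over [S] starts from [0]. *)
Lemma TRS_outageE (K : nat) (X Y1 Y2 Z : 'I_K -> R) : 0 < th1 ->
  TRS_outage rho a1 a2 varpi th1 th2 X Y1 Y2 Z <->
  forall i, TRS_relay_outage (X i) (Y1 i) (Y2 i) (Z i).
Proof.
move=> th1_gt0; rewrite /TRS_outage /TRS_relay_outage.
set S := [set i | _].
have inS i : (i \in S) = [&& th2 <= g_D2_R rho a1 a2 varpi (X i) (Z i),
    th2 <= g_D2_D1 rho a1 a2 (Y1 i) & th2 <= g_D2 rho a1 a2 (Y2 i)].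
  by apply/idP/idP => [/set_mem|/mem_set].
split.
- move=> [S0 i|[_ /bigmax_ltP[_ S_lt]] i]; rewrite -inS.
  + by rewrite S0 in_set0.
  + by case: (boolP (i \in S)) => //= /S_lt.
- move=> S_out; case: (eqVneq S set0) => [|S_neq0]; [by left | right].
  split=> //; apply/bigmax_ltP; split=> // i iS.
  by move: (S_out i); rewrite -inS iS.
Qed.

End TRS_outage_event.

Arguments TRS_relay_outage {R}.
Arguments TRS_outageE {R rho a1 a2 varpi th1 th2 K X Y1 Y2 Z}.

Lemma gain_gt0 {R : realType} (alpha g dd : R) : 0 < g -> 0 < gain alpha g dd.
Proof. by move=> g_gt0; rewrite divr_gt0 // ltr_pwDl // powR_ge0. Qed.

Lemma gain_le {R : realType} (alpha g dd : R) : 0 <= g -> gain alpha g dd <= g.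
Proof.
move=> g_ge0; have D_ge1 : 1 <= 1 + dd `^ alpha by rewrite lerDl powR_ge0.
by rewrite /gain ler_pdivrMr ?(lt_le_trans ltr01 D_ge1) // ler_peMr.
Qed.

Lemma g_D2_R_lt {R : realType} (rho a1 a2 varpi x z th : R) :
  0 < rho -> 0 < a1 -> 0 <= a2 -> 0 < th -> 0 < x <= 1 -> 0 <= varpi * z ->
  a2 < th * (varpi * z) -> g_D2_R rho a1 a2 varpi x z < th.
Proof.
move=> rho_gt0 a1_gt0 a2_ge0 th_gt0 /andP[x_gt0 x_le1] vz_ge0 a2_lt.
have rxa1_ge0 : 0 <= rho * x * a1 by rewrite !mulr_ge0 // ltW.
rewrite /g_D2_R -(mulrA rho varpi) ltr_pdivrMr; last first.
  by rewrite ltr_pwDr // addr_ge0 // mulr_ge0 // ltW.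
have : rho * x * a2 <= rho * a2 by rewrite -mulrA ler_pM2l // ler_piMl.
have : rho * a2 < rho * (th * (varpi * z)) by rewrite ltr_pM2l.
nra.
Qed.

Lemma TRS_relay_outage_loop_interference {R : realType}
    (rho a1 a2 th1 th2 x y1 y2 z : R) :
  0 < rho -> 0 < a1 -> 0 <= a2 -> 0 < th2 -> 0 < x <= 1 -> a2 / th2 < z ->
  TRS_relay_outage rho a1 a2 1 th1 th2 x y1 y2 z.
Proof.
move=> rho_gt0 a1_gt0 a2_ge0 th2_gt0 x_01 z_gt.
have z_gt0 : 0 < z by apply: le_lt_trans z_gt; rewrite divr_ge0 // ltW.
apply/orP; left; rewrite negb_and -ltNge g_D2_R_lt // mul1r ?ltW //.
by rewrite mulrC -ltr_pdivrMr.
Qed.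

Lemma rate_threshold_gt0 {R : realType} {r : R} : 0 < r -> 0 < 2 `^ r - 1.
Proof.
move=> r_gt0; rewrite subr_gt0.
have := gt0_ltr_powR r_gt0 (x := 1) (y := 2); rewrite powR1; apply.
all: by rewrite ?nnegrE ?ler01 ?ler0n ?ltr1n.
Qed.

Lemma measurable_inv (R : realType) : measurable_fun [set: R] (@GRing.inv R).
Proof.
rewrite -(setvU [set 0]); apply/measurable_funU => //; first exact: measurableC.
split; last exact: measurable_fun_set1.
apply: open_continuous_measurable_fun.
  exact/closed_openC/accessible_closed_set1/hausdorff_accessible/Rhausdorff.
by move=> x; rewrite inE /= => /eqP x_neq0; exact: inv_continuous.
Qed.

Section measurable_comp.
Context {R : realType} {d : measure_display} {T : measurableType d}.
Implicit Types (D : set T) (f : T -> R).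

Lemma measurable_funV {D f} : measurable_fun D f ->
  measurable_fun D (fun w => (f w)^-1).
Proof. exact: measurableT_comp (measurable_inv R). Qed.

Lemma measurable_fun_sqrt {D f} : measurable_fun D f ->
  measurable_fun D (fun w => Num.sqrt (f w)).
Proof.
exact: measurableT_comp (continuous_measurable_fun (@sqrt_continuous R)).
Qed.

Lemma measurable_fun_powR {D f} a : measurable_fun D f ->
  measurable_fun D (fun w => f w `^ a).
Proof. exact: measurableT_comp (measurable_powR a). Qed.

End measurable_comp.

Ltac solve_measurable := repeat first
 [ exact: measurable_cst
 | exact: measurable_funP
 | match goal with H : forall i, measurable_fun _ _ |- _ => exact: H end
 | match goal with
   | |- measurable_fun _ (fun w => @?f w * @?g w) =>
       refine (measurable_funM (f:=f) (g:=g) _ _)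
   | |- measurable_fun _ (fun w => @?f w + @?g w) =>
       refine (measurable_funD (f:=f) (g:=g) _ _)
   | |- measurable_fun _ (fun w => - @?f w) =>
       refine (measurable_funN (f:=f) _)
   | |- measurable_fun _ (fun w => (@?f w)^-1) =>
       refine (measurable_funV (f:=f) _)
   | |- measurable_fun _ (fun w => Num.sqrt (@?f w)) =>
       refine (measurable_fun_sqrt (f:=f) _)
   | |- measurable_fun _ (fun w => @?f w `^ ?a) =>
       refine (measurable_fun_powR (f:=f) a _)
   | |- measurable_fun _ (fun w => @?f w ^+ ?n) =>
       refine (measurable_funX (f:=f) n _)
   | |- measurable_fun _ (fun w => ~~ @?f w) =>
       refine (measurable_neg (f:=f) _)
   | |- measurable_fun _ (fun w => @?f w || @?g w) =>
       refine (measurable_or (f:=f) (g:=g) _ _)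
   | |- measurable_fun _ (fun w => @?f w && @?g w) =>
       refine (measurable_and (f:=f) (g:=g) _ _)
   | |- measurable_fun _ (fun w => @?f w <= @?g w) =>
       refine (measurable_fun_ler (f:=f) (g:=g) _ _)
   | |- measurable_fun _ (fun w => @?f w < @?g w) =>
       refine (measurable_fun_ltr (f:=f) (g:=g) _ _)
   | |- measurable_fun _ (fun w => Num.min (@?f w) (@?g w)) =>
       refine (measurable_minr (f:=f) (g:=g) _ _)
   end ].

Lemma measurable_TRS_outage {R : realType} {d : measure_display}
    {T : measurableType d} (K : nat) (rho a1 a2 varpi th1 th2 : R)
    (X Y1 Y2 Z : 'I_K -> T -> R) : 0 < th1 ->
  (forall i, measurable_fun setT (X i)) -> (forall i, measurable_fun setT (Y1 i)) ->
  (forall i, measurable_fun setT (Y2 i)) -> (forall i, measurable_fun setT (Z i)) ->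
  measurable [set w | TRS_outage rho a1 a2 varpi th1 th2
                        (X^~ w) (Y1^~ w) (Y2^~ w) (Z^~ w)].
Proof.
move=> th1_gt0 mX mY1 mY2 mZ.
have -> : [set w | TRS_outage rho a1 a2 varpi th1 th2
                     (X^~ w) (Y1^~ w) (Y2^~ w) (Z^~ w)] =
    \bigcap_(i in [set: 'I_K]) [set w | TRS_relay_outage rho a1 a2 varpi th1 th2
                                         (X i w) (Y1 i w) (Y2 i w) (Z i w)].
  apply/seteqP; split=> w /=.
    by move=> /(TRS_outageE th1_gt0) out i _; exact: out.
  by move=> out; apply/(TRS_outageE th1_gt0) => i; exact: out.
apply: fin_bigcap_measurable => // i _.
rewrite -[X in measurable X]setTI -preimage_true.
apply: (_ : measurable_fun setT _) => //.
rewrite /TRS_relay_outage /g_D2_R /g_D2_D1 /g_D2 /g_D1_R /g_D1.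
solve_measurable.
Qed.

Section probability_lemmas.
Context {R : realType} {d : measure_display} {T : measurableType d}.
Variable P : probability T R.

Lemma exponential_mean_gt_gt0 (m t : R) (X : T -> R) :
  exponential_mean P m X -> (0 < P (X @^-1` `]t, +oo[))%E.
Proof.
move=> hX; have -> : X @^-1` `]t, +oo[ = [set w | t < X w].
  by apply/seteqP; split=> w /=; rewrite in_itv /= andbT.
by rewrite hX lte_fin; case: ifP => _; rewrite ?expR_gt0.
Qed.

Lemma exponential_mean_itv_gt0 (m s t : R) (X : T -> R) :
  0 < m -> 0 <= s < t -> measurable_fun setT X -> exponential_mean P m X ->
  (0 < P (X @^-1` `]s, t]))%E.
Proof.
move=> m_gt0 /andP[s_ge0 s_lt_t] mX hX.
have mgt u : measurable [set w | u < X w].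
  by rewrite -[X in measurable X]setTI; exact: measurable_fun_ltr.
have -> : X @^-1` `]s, t] = [set w | s < X w] `\` [set w | t < X w].
  apply/seteqP; split=> w /=; rewrite in_itv /=.
    by move=> /andP[-> Xw_le]; split=> //; apply/negP; rewrite -leNgt.
  by move=> [-> /negP]; rewrite -leNgt.
rewrite measureD ?(le_lt_trans (probability_le1 _ _)) ?ltry //.
rewrite setIidr; last by move=> w /=; exact: lt_trans.
(* [measureD] sees [P] as a content; restate [hX] at that type. *)
have hX' u : (P : {content set T -> \bar R}) [set w | u < X w] =
    (if 0 <= u then expR (- u / m) else 1)%:E := hX u.
rewrite !hX' s_ge0 (le_trans s_ge0 (ltW s_lt_t)) -EFinB lte_fin subr_gt0.
by rewrite ltr_expR !mulNr ltrN2 ltr_pM2r ?invr_gt0.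
Qed.

Lemma indep_classes_bigcap_gt0 (J : finType) (E : J -> set (set T))
    (A : J -> set T) :
  indep_classes P E -> (forall j, E j (A j)) -> (forall j, 0 < P (A j))%E ->
  (0 < P (\bigcap_(j in [set: J]) A j))%E.
Proof.
move=> indepE EA PA_gt0; rewrite indepE //.
by apply: (big_ind (fun x => 0 < x)%E) => // x y; exact: mule_gt0.
Qed.

End probability_lemmas.

Section strong_loop_interference.
Context {R : realType} {d : measure_display} {T : measurableType d}.
Context {P : probability T R} {K : nat}.
Variables (OmegaLI c : R).
Variables (px py gSR gRD1 gRD2 Z : 'I_K -> {RV P >-> R}).

Definition strong_LI_component (j : 'I_K * 'I_5) : set T :=
  match nat_of_ord j.2 with
  | 1 => gSR j.1 @^-1` `]0, 1]
  | 4 => Z j.1 @^-1` `]c, +oo[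
  | _ => setT
  end.

Definition strong_LI_event : set T :=
  \bigcap_(j in [set: 'I_K * 'I_5]) strong_LI_component j.

Lemma measurable_strong_LI_event : measurable strong_LI_event.
Proof.
apply: fin_bigcap_measurable => // -[i [[|[|[|[|[|k]]]]] ?]] _;
  rewrite /strong_LI_component //=; exact: measurable_funPTI.
Qed.

Lemma strong_LI_eventP w : strong_LI_event w ->
  forall i, 0 < gSR i w <= 1 /\ c < Z i w.
Proof.
move=> Fw i; have := Fw (i, Ordinal (isT : (1 < 5)%N)) I.
have := Fw (i, Ordinal (isT : (4 < 5)%N)) I.
by rewrite /strong_LI_component /= !in_itv /= andbT.
Qed.

Hypotheses (gSR_exp : forall i, exponential_mean P 1 (gSR i))
  (Z_exp : forall i, exponential_mean P OmegaLI (Z i))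
  (indep : indep_classes P (fun j : 'I_K * 'I_5 =>
    match nat_of_ord j.2 with
    | 0 => events_of2 (px j.1) (py j.1)
    | 1 => events_of (gSR j.1)
    | 2 => events_of (gRD1 j.1)
    | 3 => events_of (gRD2 j.1)
    | _ => events_of (Z j.1)
    end)).

Lemma strong_LI_event_gt0 : (0 < P strong_LI_event)%E.
Proof.
apply: indep_classes_bigcap_gt0 indep _ _ => -[i [[|[|[|[|[|k]]]]] ?]];
  rewrite /strong_LI_component /=; try by rewrite probability_setT lte01.
all: try by exists setT => //; exact: measurableT.
- by exists `]0, 1]%classic => //; exact: measurable_itv.
- by exists `]c, +oo[%classic => //; exact: measurable_itv.
- by apply: exponential_mean_itv_gt0; rewrite ?ltr01 ?lexx.
- exact: exponential_mean_gt_gt0.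
Qed.

End strong_loop_interference.

Arguments strong_LI_eventP {R d T P K c gSR Z w}.
Arguments strong_LI_event_gt0 {R d T P K OmegaLI c px py gSR gRD1 gRD2 Z}.

Lemma ln_bounded_over_ln_cvg0 {R : realType} (f : R -> R) (r : R) :
  0 < r -> (forall x, 0 < x -> r <= f x <= 1) ->
  - (ln (f x) / ln x) @[x --> +oo] --> 0.
Proof.
move=> r_gt0 f_bnd; pose M := - ln r.
apply/cvgrPdist_lt => e e_gt0.
exists (Num.max 1 (expR (M / e))); split; first exact: num_real.
move=> x; rewrite gt_max => /andP[x_gt1 x_gtM].
have lnx_gt0 : 0 < ln x by exact: ln_gt0.
have /andP[r_le f_le1] := f_bnd x (lt_trans ltr01 x_gt1).
have lnf_le : `|ln (f x)| <= M.
  rewrite ler0_norm ?ln_le0 // lerN2 ler_ln // posrE.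
  exact: lt_le_trans r_le.
have M_lt : M < e * ln x.
  rewrite -ltr_pdivrMl // mulrC -ltr_expR lnK // posrE.
  exact: lt_trans x_gt1.
rewrite sub0r opprK normrM normfV (gtr0_norm lnx_gt0) ltr_pdivrMr //.
exact: le_lt_trans lnf_le M_lt.
Qed.

Theorem mainTheorem3 (R : realType) (d : measure_display) (T : measurableType d)
  (P : probability T R) (K : nat) (RD alpha OmegaLI a1 a2 RD1 RD2 : R)
  (u1 u2 : R * R)
  (px py gSR gRD1 gRD2 Z : 'I_K -> {RV P >-> R}) :
  (1 <= K)%N -> 0 < RD -> 0 < alpha -> 0 < OmegaLI ->
  0 < RD1 -> 0 < RD2 ->
  0 < dist2 (0, 0) u1 -> 0 < dist2 (0, 0) u2 ->
  0 < a1 -> a1 < a2 -> a1 + a2 = 1 ->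
  a1 * (2 `^ RD2 - 1) < a2 ->
  (forall i, uniform_disc P RD (px i) (py i)) ->
  (forall i, exponential_mean P 1 (gSR i)) ->
  (forall i, exponential_mean P 1 (gRD1 i)) ->
  (forall i, exponential_mean P 1 (gRD2 i)) ->
  (forall i, exponential_mean P OmegaLI (Z i)) ->
  indep_classes P (fun j : 'I_K * 'I_5 =>
    match nat_of_ord j.2 with
    | 0 => events_of2 (px j.1) (py j.1)
    | 1 => events_of (gSR j.1)
    | 2 => events_of (gRD1 j.1)
    | 3 => events_of (gRD2 j.1)
    | _ => events_of (Z j.1)
    end) ->
  let P_TRS_FD := fun rho : R =>
    fine (P [set w | TRS_outage rho a1 a2 1 (2 `^ RD1 - 1) (2 `^ RD2 - 1)
      (fun i => gain alpha (gSR i w) (dist2 (0, 0) (px i w, py i w)))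
      (fun i => gain alpha (gRD1 i w) (dist2 (px i w, py i w) u1))
      (fun i => gain alpha (gRD2 i w) (dist2 (px i w, py i w) u2))
      (fun i => Z i w)]) in
  (fun rho => - (ln (P_TRS_FD rho) / ln rho)) x @[x --> +oo] --> 0.
Proof.
move=> _ _ _ _ RD1_gt0 RD2_gt0 _ _ a1_gt0 a1_lt_a2 _ _ _ gSR_exp _ _
  Z_exp indep P_TRS_FD.
have th1_gt0 := rate_threshold_gt0 RD1_gt0.
have th2_gt0 := rate_threshold_gt0 RD2_gt0.
have a2_ge0 : 0 <= a2 by rewrite ltW // (lt_trans a1_gt0).
pose F := strong_LI_event (a2 / (2 `^ RD2 - 1)) gSR Z.
have mF : measurable F := measurable_strong_LI_event _ _ _.
have PF_gt0 : (0 < P F)%E := strong_LI_event_gt0 gSR_exp Z_exp indep.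
apply: (@ln_bounded_over_ln_cvg0 _ _ (fine (P F))).
  by rewrite fine_gt0 // PF_gt0 (le_lt_trans (probability_le1 _ mF)) ?ltry.
move=> rho rho_gt0; rewrite /P_TRS_FD; set O := [set w | _].
have mO : measurable O.
  apply: measurable_TRS_outage => // i; rewrite /gain /dist2 /=; solve_measurable.
have FO : F `<=` O.
  move=> w /strong_LI_eventP Fw; apply/(TRS_outageE th1_gt0) => i.
  have [/andP[gSR_gt0 gSR_le1] Z_gt] := Fw i.
  apply: TRS_relay_outage_loop_interference => //.
  by rewrite gain_gt0 // (le_trans (gain_le _ _ _ (ltW gSR_gt0))).
rewrite fine_le ?fin_num_measure ?le_measure ?inE //=.
by rewrite -lee_fin fineK ?fin_num_measure ?probability_le1.
Qed.
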